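(* Let $r \geq 3$ and $k \geq \max\{r-1,4\}$ be integers. Define the binary word $x_{k,r} = ((01)^{k-1} 00)^{r-3} (01)^{k-1} 0$. Then $|x_{k,r}| = 2k(r-2)-1$, and $x_{k,r}$ contains no $k$-power as a factor and no $r$-antipower as a factor.
   Context: For a word $u$ and integer $k\ge 1$, $u^k$ denotes the concatenation of $k$ copies of $u$. A $k$-power is a word of the form $u^k$ with $u$ nonempty. An $r$-antipower is a word of the form $u_1 u_2 \cdots u_r$ with $|u_1| = \cdots = |u_r|$ and the words $u_1,\dots,u_r$ pairwise distinct. A factor of a word $w$ is a contiguous subword of $w$. $|w|$ denotes the length of $w$. *)

From mathcomp Require Import all_boot.
Set Implicit Arguments. Unset Strict Implicit. Unset Printing Implicit Defensive.

(* Binary words as sequences of booleans: false = 0, true = 1. *)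
Definition word := seq bool.

Definition wpow (u : word) (k : nat) : word := flatten (nseq k u).

Definition is_factor (w x : word) : Prop := exists p s : word, x = p ++ w ++ s.

Definition is_kpower (k : nat) (w : word) : Prop :=
  exists u : word, u <> [::] /\ w = wpow u k.

Definition is_antipower (r : nat) (w : word) : Prop :=
  exists us : seq word,
    [/\ size us = r, w = flatten us,
        (forall u v, u \in us -> v \in us -> size u = size v) & uniq us].

Definition x_word (k r : nat) : word :=
  wpow (wpow [:: false; true] (k - 1) ++ [:: false; false]) (r - 3)
  ++ wpow [:: false; true] (k - 1) ++ [:: false].

From mathcomp Require Import all_boot zify.
Set Implicit Arguments. Unset Strict Implicit. Unset Printing Implicit Defensive.

(* x_{k,r} is a prefix of the periodic word ((01)^{k-1} 00)^ω, whose 1s sit at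
   the odd positions i with 2k ∤ i + 1.  The factors 00 of this word occur
   exactly at the positions i with 2k | i + 1 or 2k | i + 2, so two of them are
   at distance 1 or at distance at least 2k - 1.
   In a factor u^k with |u| = m, a factor 00 and its translate by ±m are two
   such factors at distance m, forcing m >= 2k - 1 (for m = 1 the run 0000 is
   impossible); but then |u^k| >= k(2k - 1) exceeds |x_{k,r}|.
   In a factor u_1 ... u_r with |u_i| = m, a block u_i not containing a position
   i with 2k | i + 1 is alternating, hence one of two words; the other blocks
   contain pairwise distinct such positions, and x_{k,r} has only r - 3 of them.
   So at least three blocks are alternating and two of them coincide. *)

Lemma mkseqD (T : Type) (f : nat -> T) m n :
  mkseq f (m + n) = mkseq f m ++ mkseq (fun i => f (m + i)) n.
Proof.
have iota_shift : iota m n = map (addn m) (iota 0 n) by rewrite -iotaDl addn0.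
by rewrite /mkseq iotaD map_cat add0n iota_shift -map_comp.
Qed.

Lemma eq_in_mkseq (T : Type) (f g : nat -> T) n :
  (forall i, i < n -> f i = g i) -> mkseq f n = mkseq g n.
Proof. by move=> eq_fg; apply/eq_in_map => i; rewrite mem_iota => /eq_fg. Qed.

Lemma reshape_mkseq (T : Type) (g : nat -> T) r m :
  reshape (nseq r m) (mkseq g (r * m)) =
  mkseq (fun t => mkseq (fun j => g (t * m + j)) m) r.
Proof.
elim: r g => [|r IHr] g //=.
rewrite mulSn mkseqD take_size_cat ?size_mkseq // drop_size_cat ?size_mkseq //.
rewrite IHr -add1n mkseqD /= mul0n; congr (_ :: _); apply/eq_mkseq => t.
by apply/eq_mkseq => j; rewrite mulnDl mul1n addnA.
Qed.

Lemma size_wpow (u : word) n : size (wpow u n) = size u * n.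
Proof. by rewrite size_flatten /shape map_nseq sumn_nseq mulnC. Qed.

Lemma nth_wpow (u : word) n i :
  i < size u * n -> nth false (wpow u n) i = nth false u (i %% size u).
Proof.
elim: n i => [|n IHn] i; first by rewrite muln0.
rewrite /= nth_cat mulnS => lt_i.
case: ltnP => [lt_iu|le_ui]; first by rewrite modn_small.
rewrite IHn; last lia.
by rewrite -(modnDr (i - size u)) subnK.
Qed.

Lemma nth_wpowD (u : word) n i :
  i + size u < size u * n ->
  nth false (wpow u n) (i + size u) = nth false (wpow u n) i.
Proof. by move=> lt_i; rewrite !nth_wpow ?modnDr //; lia. Qed.

Lemma wpow_mkseq_cat (f : nat -> bool) p n m :
  (forall i, f (p + i) = f i) ->
  wpow (mkseq f p) n ++ mkseq f m = mkseq f (p * n + m).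
Proof.
move=> f_per; elim: n => [|n IHn] /=; first by rewrite muln0.
by rewrite -catA IHn mulnS -addnA [RHS]mkseqD (eq_mkseq f_per).
Qed.

Lemma factor_mkseq (f : nat -> bool) N w :
  is_factor w (mkseq f N) ->
  exists2 P, P + size w <= N & w = mkseq (fun i => f (P + i)) (size w).
Proof.
move=> [p [s eN]]; exists (size p).
  by rewrite -(size_mkseq f N) eN !size_cat addnA leq_addr.
apply: (@eq_from_nth _ false); rewrite ?size_mkseq // => i lt_i.
have lt_iN : size p + i < N by rewrite -(size_mkseq f N) eN !size_cat; lia.
rewrite nth_mkseq // -(nth_mkseq false f lt_iN) eN.
by rewrite nth_cat ltnNge leq_addr addKn /= nth_cat lt_i.
Qed.

Lemma antipower_reshape r w :
  is_antipower r w -> exists m, size w = r * m /\ uniq (reshape (nseq r m) w).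
Proof.
move=> [us [size_us -> eq_size uniq_us]].
exists (size (nth [::] us 0)).
have shape_us : shape us = nseq r (size (nth [::] us 0)).
  case: us size_us eq_size {uniq_us} => [<-//|u us] size_us eq_size.
  rewrite -size_us -(size_map size); apply/all_pred1P; rewrite all_map.
  by apply/allP => v v_in /=; rewrite (eq_size v u) ?mem_head.
by rewrite -shape_us flattenK size_flatten shape_us sumn_nseq mulnC.
Qed.

Definition x_inf (k i : nat) : bool := odd i && ~~ (2 * k %| i.+1).

Definition zero_pair (f : nat -> bool) (i : nat) : bool := ~~ f i && ~~ f i.+1.

Lemma dvdn_sep d a b : 0 < d -> d %| a -> d %| b -> [\/ a = b, a + d <= b | b + d <= a].
Proof.
move=> d_gt0 dvd_a dvd_b; case: (ltngtP a b) => [lt_ab|lt_ba|->]; last exact: Or31.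
  apply: Or32; move: (dvdn_sub dvd_b dvd_a) => /dvdn_leq.
  by rewrite subn_gt0 => /(_ lt_ab); lia.
apply: Or33; move: (dvdn_sub dvd_a dvd_b) => /dvdn_leq.
by rewrite subn_gt0 => /(_ lt_ba); lia.
Qed.

Lemma count_ascents_le (g : nat -> nat) n : {homo g : a b / a <= b} ->
  count (fun t => g t < g t.+1) (iota 0 n) <= g n - g 0.
Proof.
move=> g_mono; elim: n => [|n IHn] //.
rewrite -[in iota _ _]addn1 iotaD count_cat /= addn0 add0n.
have := g_mono 0 n (leq0n n); have := g_mono n n.+1 (leqnSn n).
by case: ltnP => /=; lia.
Qed.

Section Xinf.

Variable k : nat.
Hypothesis k_gt0 : 0 < k.

Lemma x_inf_periodic n i : x_inf k (2 * k * n + i) = x_inf k i.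
Proof. by rewrite /x_inf oddD !oddM /= -addnS (dvdn_addr _ (dvdn_mulr n (dvdnn _))). Qed.

Lemma x_inf_prefix j : j <= 2 ->
  wpow [:: false; true] (k - 1) ++ nseq j false = mkseq (x_inf k) (2 * (k - 1) + j).
Proof.
move=> le_j2.
have -> : wpow [:: false; true] (k - 1) = mkseq odd (2 * (k - 1)).
  by rewrite -[2 * _]addn0 -wpow_mkseq_cat ?cats0 // => i; rewrite oddD.
rewrite mkseqD; congr (_ ++ _).
  apply: eq_in_mkseq => i lt_i; rewrite /x_inf gtnNdvd ?andbT //; lia.
have last_dvd : 2 * k %| (2 * (k - 1) + 1).+1.
  by rewrite (_ : (2 * (k - 1) + 1).+1 = 2 * k) //; lia.
by case: j le_j2 => [|[|[|//]]] _;
  rewrite /mkseq /= /x_inf ?addn0 ?oddM /= ?last_dvd ?andbF.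
Qed.

Lemma x_wordE r : 2 < r -> x_word k r = mkseq (x_inf k) (2 * k * (r - 2) - 1).
Proof.
move=> lt2r; rewrite /x_word.
rewrite -[[:: false; false]]/(nseq 2 false) -[[:: false]]/(nseq 1 false).
rewrite !x_inf_prefix // (_ : 2 * (k - 1) + 2 = 2 * k); last by lia.
rewrite wpow_mkseq_cat => [|i]; last by rewrite -[2 * k]muln1 x_inf_periodic.
congr mkseq; nia.
Qed.

Lemma zero_pair_x_inf i : zero_pair (x_inf k) i = (2 * k %| i.+1) || (2 * k %| i.+2).
Proof.
have even_of_dvd n : 2 * k %| n -> ~~ odd n.
  by move/(dvdn_trans (dvdn_mulr k (dvdnn 2))); rewrite dvdn2.
rewrite /zero_pair /x_inf /=; case odd_i: (odd i) => /=; rewrite ?negbK ?andbT.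
  by case: (boolP (2 * k %| i.+2)) => [/even_of_dvd|_]; rewrite /= ?odd_i ?orbF.
by case: (boolP (2 * k %| i.+1)) => [/even_of_dvd|_]; rewrite /= ?odd_i.
Qed.

Lemma zero_pair_gap i j : zero_pair (x_inf k) i -> zero_pair (x_inf k) j ->
  i.+1 < j -> i + (2 * k).-1 <= j.
Proof.
have d_gt0 : 0 < 2 * k by lia.
rewrite !zero_pair_x_inf => /orP[] dvd_i /orP[] dvd_j lt_ij;
  by case: (dvdn_sep d_gt0 dvd_i dvd_j); lia.
Qed.

Lemma zero_pair_window P : exists2 a, a < (2 * k).-1 & zero_pair (x_inf k) (P + a).
Proof.
have d_gt0 : 0 < 2 * k by lia.
pose s := (P %/ (2 * k)).+1 * (2 * k).
have dvd_s : 2 * k %| s by apply: dvdn_mull.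
have [lt_Ps le_sP] : P < s /\ s <= P + 2 * k.
  by rewrite /s mulSn {2 3}(divn_eq P (2 * k)); have := ltn_pmod P d_gt0; lia.
have [eq_s|lt_s] := eqVneq s P.+1.
  by exists 0; [lia | rewrite addn0 zero_pair_x_inf -eq_s dvd_s].
exists (s - P.+2); first lia.
by rewrite zero_pair_x_inf (_ : (P + (s - P.+2)).+2 = s) ?dvd_s ?orbT //; lia.
Qed.

Lemma x_inf_kpower_period_ge P m : 4 <= k -> 0 < m ->
  (forall i, i + m < k * m -> x_inf k (P + (i + m)) = x_inf k (P + i)) ->
  (2 * k).-1 <= m.
Proof.
move=> le4k m_gt0 per.
have zero_pair_shift a : a.+1 + m < k * m ->
    zero_pair (x_inf k) (P + (a + m)) = zero_pair (x_inf k) (P + a).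
  by move=> lt_a; rewrite /zero_pair -addnS -addSn -addnS !per //; lia.
have [m_eq1|lt1m] := eqVneq m 1.
  subst m; have const i : i < 3 -> x_inf k (P + i.+1) = x_inf k (P + i).
    by move=> lt_i3; rewrite -addn1 per //; lia.
  have x_P : x_inf k (P + 0) = false.
    by move: (const 0 isT); rewrite /x_inf addn0 addn1 /=; case: (odd P) => /= [<-|].
  have zero_at i : i < 3 -> zero_pair (x_inf k) (P + i).
    by case: i => [|[|[|]]] // _; rewrite /zero_pair -addnS !const ?x_P.
  by have := zero_pair_gap (zero_at 0 isT) (zero_at 2 isT); lia.
have [a lt_a zero_a] := zero_pair_window P.
have [lt_am|le_ma] := ltnP a m.
  have zero_am : zero_pair (x_inf k) (P + (a + m)) by rewrite zero_pair_shift //; nia.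
  by have := zero_pair_gap zero_a zero_am; lia.
have zero_b : zero_pair (x_inf k) (P + (a - m)) by rewrite -zero_pair_shift ?subnK //; nia.
by have := zero_pair_gap zero_b zero_a; lia.
Qed.

Lemma x_inf_alternating Q m : Q %/ (2 * k) = (Q + m) %/ (2 * k) ->
  mkseq (fun j => x_inf k (Q + j)) m = mkseq (fun j => odd Q (+) odd j) m.
Proof.
have d_gt0 : 0 < 2 * k by lia.
move=> eq_div; apply: eq_in_mkseq => j lt_jm.
rewrite /x_inf oddD; case: (boolP (2 * k %| (Q + j).+1)) => [dvd_s|_]; last first.
  by rewrite andbT.
have : Q %/ (2 * k) < (Q + j).+1 %/ (2 * k) by rewrite ltn_divLR // divnK //; lia.
by have := leq_div2r (2 * k) (_ : (Q + j).+1 <= Q + m); lia.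
Qed.

Lemma x_inf_blocks_not_uniq r P m : P + r * m < 2 * k * (r - 2) ->
  ~~ uniq (mkseq (fun t => mkseq (fun j => x_inf k (P + (t * m + j))) m) r).
Proof.
have d_gt0 : 0 < 2 * k by lia.
move=> lt_N; apply/negP => uniq_blocks.
pose g t := (P + t * m) %/ (2 * k).
have g_mono : {homo g : a b / a <= b}.
  by move=> a b le_ab; apply/leq_div2r; rewrite leq_add2l leq_mul2r le_ab orbT.
have g_r : g r < r - 2 by rewrite /g ltn_divLR // [_ * (2 * k)]mulnC.
pose ascent t := g t < g t.+1.
pose flat := filter (predC ascent) (iota 0 r).
have few_ascents : count ascent (iota 0 r) <= g r - g 0 := count_ascents_le r g_mono.
have size_flat : 3 <= size flat.
  by have := count_predC ascent (iota 0 r); rewrite size_iota size_filter; lia.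
pose alt b := mkseq (fun j => b (+) odd j) m.
pose block t := mkseq (fun j => x_inf k (P + (t * m + j))) m.
have block_flat t : t \in flat -> block t \in [:: alt false; alt true].
  rewrite mem_filter => /andP[/= flat_t _].
  have eq_g : g t = g t.+1 by apply/eqP; rewrite eqn_leq g_mono // leqNgt flat_t.
  have -> : block t = mkseq (fun j => x_inf k (P + t * m + j)) m.
    by apply: eq_mkseq => j; rewrite addnA.
  rewrite x_inf_alternating; first by case: (odd _); rewrite /alt !inE eqxx ?orbT.
  by rewrite -addnA -mulSnr.
have uniq_flat : uniq (map block flat).
  by apply: subseq_uniq uniq_blocks; apply/map_subseq/filter_subseq.
have alt_flat : {subset map block flat <= [:: alt false; alt true]}.
  by move=> _ /mapP[t t_in ->]; apply: block_flat.
by have := uniq_leq_size uniq_flat alt_flat; rewrite size_map /=; lia.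
Qed.

End Xinf.

Theorem theorem1 (k r : nat) :
  3 <= r -> maxn (r - 1) 4 <= k ->
  size (x_word k r) = 2 * k * (r - 2) - 1 /\
  (forall w, is_factor w (x_word k r) -> ~ is_kpower k w) /\
  (forall w, is_factor w (x_word k r) -> ~ is_antipower r w).
Proof.
move=> le3r; rewrite geq_max => /andP[le_r1k le4k].
have k_gt0 : 0 < k by lia.
rewrite x_wordE //; split; first by rewrite size_mkseq.
split=> w /factor_mkseq[P le_PN w_eq].
  move=> [u [/eqP u_nil w_pow]]; set m := size u.
  have m_gt0 : 0 < m by rewrite lt0n size_eq0.
  have size_w : size w = m * k by rewrite w_pow size_wpow.
  have nth_w i : i < size w -> nth false w i = x_inf k (P + i).
    by move=> lt_i; rewrite {1}w_eq nth_mkseq.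
  have per i : i + m < k * m -> x_inf k (P + (i + m)) = x_inf k (P + i).
    move=> lt_i; have lt_im : i + m < size w by rewrite size_w mulnC.
    rewrite -!nth_w //; last exact: leq_ltn_trans (leq_addr m i) lt_im.
    by rewrite w_pow nth_wpowD // -size_wpow -w_pow.
  by have := x_inf_kpower_period_ge k_gt0 le4k m_gt0 per; nia.
move=> /antipower_reshape[m [size_w uniq_w]].
rewrite w_eq size_w reshape_mkseq in uniq_w.
by apply/negP: uniq_w; apply: x_inf_blocks_not_uniq; nia.
Qed.
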